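(* (1) For $\eta=n_1\omega_1+\dots+n_r\omega_r\in P^+$, $|\mathcal B^{r-1/2}(\eta)|=\prod_{i=1}^r\left(\binom{2r-1}{i}-\binom{2r-1}{i-2}\right)^{n_i}$. (2) For $\lambda=m_1\omega_1+\dots+m_r\omega_r\in P^+$, $|\mathcal B^{r}(\lambda)|=\prod_{i=1}^r\left(\binom{2r}{i}-\binom{2r}{i-2}\right)^{m_i}$.
   Context: Fix $r\ge1$, $\mathfrak g=\mathfrak{sp}_{2r}$ (matrices with rows/columns indexed $1,\dots,r,-r,\dots,-1$ and $a_{i,j}=-\mathrm{sgn}(i)\mathrm{sgn}(j)a_{-j,-i}$), root vectors $x^-_{i,j-1}=E_{j,i}-E_{-i,-j}$, $x^-_{i,\overline{j}}=E_{-j,i}+E_{-i,j}$ ($1\le i<j\le r$), $x^-_{i,\overline{i}}=E_{-i,i}$; fundamental weights $\omega_i=\varepsilon_1+\dots+\varepsilon_i$, $P^+=\sum\mathbb N\omega_i$; for $\mu=\sum n_i\omega_i$ write $\mu_i=n_i+\dots+n_r$. Binomials $\binom{n}{k}$ with $k<0$ are $0$. For a root vector $x$ and partition $\mathbf s=(\mathbf s(1)\le\dots\le\mathbf s(\ell))\in\mathbb N^\ell$, $\mathbf x(\ell,\mathbf s)=(x\otimes t^{\mathbf s(1)})\cdots(x\otimes t^{\mathbf s(\ell)})\in\mathbf U(\mathfrak g\otimes\mathbb C[t])$ ($=1$ if $\ell=0$); $\mathbf s$ fits into $(\ell,\ell')$ if $\mathbf s(\ell)\le\ell'$. A pattern with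 bounding sequence $\lambda$: integers $\eta^j_i,\lambda^j_i$ ($1\le i\le j\le r$), $\lambda^r_i=\lambda_i$, with $\lambda^j_i\ge\eta^j_i\ge\lambda^j_{i+1}$ ($1\le i\le j\le r$, $\lambda^j_{j+1}=0$) and $\eta^{j+1}_i\ge\lambda^j_i\ge\eta^{j+1}_{i+1}$ ($1\le i\le j<r$). A restricted pattern with bounding sequence $\eta$: integers $\eta^j_i$ ($1\le i\le j\le r$) and $\lambda^j_i$ ($1\le i\le j< r$), $\eta^r_i=\eta_i$, with $\lambda^j_i\ge\eta^j_i\ge\lambda^j_{i+1}$ and $\eta^{j+1}_i\ge\lambda^j_i\ge\eta^{j+1}_{i+1}$ for $1\le i\le j<r$ ($\lambda^j_{j+1}=0$). Differences: $\ell_{i,\overline{j}}=\lambda^j_i-\eta^j_i$, $\ell'_{i,\overline{j}}=\eta^j_i-\lambda^j_{i+1}$, $\ell_{i,j}=\eta^{j+1}_i-\lambda^j_i$, $\ell'_{i,j}=\lambda^j_i-\eta^{j+1}_{i+1}$ (whenever defined). A POP (with bounding sequence $\lambda$) is a pattern plus partitions $\mathbf s_{i,\overline j}$ fitting $(\ell_{i,\overline j},\ell'_{i,\overline j})$ for $1\le i\le j\le r$ and $\mathbf s_{i,j}$ fitting $(\ell_{i,j},\ell'_{i,j})$ for $1\le i\le j<r$; a restricted POP (with bounding sequence $\eta$) is a restricted pattern plus such partitions $\mathbf s_{i,\overline j},\mathbf s_{i,j}$ for $1\le i\le j<r$. Put $X_{\overline j}=\prod_{i=1}^{j}\mathbf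 x^-_{i,\overline j}(\ell_{i,\overline j},\mathbf s_{i,\overline j})$, $X_j=\prod_{i=1}^{j}\mathbf x^-_{i,j}(\ell_{i,j},\mathbf s_{i,j})$ (increasing $i$). $\mathcal B^r(\lambda)$ is the set of elements $X_{\overline1}X_1\cdots X_{\overline{r-1}}X_{r-1}X_{\overline r}$ over POPs with bounding sequence $\lambda$, and $\mathcal B^{r-1/2}(\eta)$ the set of elements $X_{\overline1}X_1\cdots X_{\overline{r-1}}X_{r-1}$ over restricted POPs with bounding sequence $\eta$. *)

From mathcomp Require Import all_boot all_order all_algebra.
Set Implicit Arguments. Unset Strict Implicit. Unset Printing Implicit Defensive.
Import GRing.Theory Num.Theory.

(* A letter (x^-_{root} (x) t^e) of a monomial in U(sp_2r (x) C[t]):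
   ((b, i, j), e) stands for x^-_{i,\bar j} (x) t^e if b = true and
   x^-_{i,j} (x) t^e if b = false. *)
Definition letter := (bool * nat * nat * nat)%type.
Definition word := seq letter.

Definition binZ (n : nat) (k : int) : int :=
  match k with Posz k => Posz 'C(n, k) | Negz _ => 0%R end.

Definition wsum (r : nat) (n : nat -> nat) (i : nat) : nat :=
  \sum_(i <= k < r.+1) n k.

Definition fits (s : seq nat) (l l' : nat) : Prop :=
  size s = l /\ sorted leq s /\ all (fun x => x <= l') s.

Definition lamx (lam : nat -> nat -> nat) (j i : nat) : nat :=
  if i == j.+1 then 0 else lam j i.

(* pattern with bounding sequence bnd ; lam j i = lambda^j_i, eta j i = eta^j_i *)
Definition is_pattern (r : nat) (bnd : nat -> nat) (lam eta : nat -> nat -> nat) : Prop :=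
  (forall i, 1 <= i <= r -> lam r i = bnd i) /\
  (forall i j, 1 <= i -> i <= j -> j <= r ->
     lamx lam j (i.+1) <= eta j i <= lam j i) /\
  (forall i j, 1 <= i -> i <= j -> j < r ->
     eta j.+1 i.+1 <= lam j i <= eta j.+1 i).

Definition is_rpattern (r : nat) (bnd : nat -> nat) (lam eta : nat -> nat -> nat) : Prop :=
  (forall i, 1 <= i <= r -> eta r i = bnd i) /\
  (forall i j, 1 <= i -> i <= j -> j < r ->
     lamx lam j (i.+1) <= eta j i <= lam j i) /\
  (forall i j, 1 <= i -> i <= j -> j < r ->
     eta j.+1 i.+1 <= lam j i <= eta j.+1 i).

Definition lb  (lam eta : nat -> nat -> nat) i j := lam j i - eta j i.
Definition lb' (lam eta : nat -> nat -> nat) i j := eta j i - lamx lam j i.+1.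
Definition ln  (lam eta : nat -> nat -> nat) i j := eta j.+1 i - lam j i.
Definition ln' (lam eta : nat -> nat -> nat) i j := lam j i - eta j.+1 i.+1.

Definition xmon (b : bool) (i j : nat) (s : seq nat) : word :=
  [seq (b, i, j, e) | e <- s].

Definition Xbar (sb : nat -> nat -> seq nat) (j : nat) : word :=
  flatten [seq xmon true i j (sb i j) | i <- iota 1 j].
Definition Xpl (sn : nat -> nat -> seq nat) (j : nat) : word :=
  flatten [seq xmon false i j (sn i j) | i <- iota 1 j].

Definition Xhalf (r : nat) sb sn : word :=
  flatten [seq Xbar sb j ++ Xpl sn j | j <- iota 1 r.-1].

Definition Bfull (r : nat) (lambda : nat -> nat) (w : word) : Prop :=
  exists lam eta sb sn,
    is_pattern r lambda lam eta /\
    (forall i j, 1 <= i -> i <= j -> j <= r ->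
       fits (sb i j) (lb lam eta i j) (lb' lam eta i j)) /\
    (forall i j, 1 <= i -> i <= j -> j < r ->
       fits (sn i j) (ln lam eta i j) (ln' lam eta i j)) /\
    w = Xhalf r sb sn ++ Xbar sb r.

Definition Bhalf (r : nat) (etab : nat -> nat) (w : word) : Prop :=
  exists lam eta sb sn,
    is_rpattern r etab lam eta /\
    (forall i j, 1 <= i -> i <= j -> j < r ->
       fits (sb i j) (lb lam eta i j) (lb' lam eta i j)) /\
    (forall i j, 1 <= i -> i <= j -> j < r ->
       fits (sn i j) (ln lam eta i j) (ln' lam eta i j)) /\
    w = Xhalf r sb sn.

Definition has_card (P : word -> Prop) (c : int) : Prop :=
  exists s : seq word, uniq s /\ (forall w, P w <-> w \in s) /\ Posz (size s) = c.

From mathcomp Require Import all_boot all_order all_algebra zify.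
Import GRing.Theory.

(* Removing the last layer of a monomial gives the recursions
     B^r(lam) = disjoint union over eta of B^(r-1/2)(eta) X_(bar r),
     B^(r+1/2)(eta) = disjoint union over lam of B^r(lam) X_r,
   where the new top row interlaces the bounding sequence and the last layer is
   a free choice of partitions s_(i, .) fitting its differences; the union is
   disjoint because the last layer consists exactly of the letters with the
   largest second index.  An entry x in [lo, hi] admits C(hi - lo, hi - x)
   partitions, so if the cardinality of the inner sets is prod_m a_m^(x_m - x_(m+1))
   in terms of their bounding sequence x, the binomial theorem sums the
   recursion to a_k^(lo_k) prod_m (a_m + a_(m-1))^(hi_m - lo_m).  For
   a_m = C(N, m) - C(N, m - 2) this is the Pascal rule passing from N to N + 1,
   together with a_(r+1) = 0 for N = 2r at the half step. *)

Set Implicit Arguments.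
Unset Strict Implicit.
Unset Printing Implicit Defensive.

Fixpoint sorted_seqs (l : nat) : nat -> nat -> seq (seq nat) :=
  match l with
  | 0 => fun _ _ => [:: [::]]
  | l'.+1 => fix sorted_seqs_l (d lo : nat) {struct d} :=
      match d with
      | 0 => [:: nseq l'.+1 lo]
      | d'.+1 => map (cons lo) (sorted_seqs l' d lo) ++ sorted_seqs_l d' lo.+1
      end
  end.

Lemma sorted_seqsS0 l lo : sorted_seqs l.+1 0 lo = [:: nseq l.+1 lo].
Proof. by []. Qed.

Lemma sorted_seqsSS l d lo :
  sorted_seqs l.+1 d.+1 lo =
  map (cons lo) (sorted_seqs l d.+1 lo) ++ sorted_seqs l.+1 d lo.+1.
Proof. by []. Qed.

Lemma size_sorted_seqs l d lo : size (sorted_seqs l d lo) = 'C(l + d, l).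
Proof.
elim: l d lo => [|l IHl] d lo; first by rewrite bin0.
elim: d lo => [|d IHd] lo; first by rewrite sorted_seqsS0 addn0 binn.
rewrite sorted_seqsSS size_cat size_map IHl IHd.
by rewrite [in RHS]addSn binS addSn -addnS addnC.
Qed.

Lemma sorted_nseq (x : nat) n : sorted leq (nseq n x).
Proof. by elim: n => //= -[|n] //= ->; rewrite leqnn. Qed.

Lemma mem_sorted_seqs l d lo s :
  (s \in sorted_seqs l d lo) =
  [&& size s == l, sorted leq s & all (fun x => lo <= x <= lo + d) s].
Proof.
elim: l d lo s => [|l IHl] d lo s.
  by case: s => [|x s]; rewrite ?mem_seq1 ?andbF.
elim: d lo s => [|d IHd] lo s.
  rewrite sorted_seqsS0 mem_seq1 addn0.
  rewrite (@eq_all _ _ (pred1 lo)); last by move=> x; rewrite /= eq_sym eqn_leq.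
  apply/eqP/and3P => [->|[/eqP <- _ /all_pred1P //]].
  by rewrite size_nseq sorted_nseq all_nseq /= !eqxx.
rewrite sorted_seqsSS mem_cat IHd.
case: s => [|x s] /=; first by rewrite orbF; apply/negbTE/mapP => -[].
rewrite (path_sortedE leq_trans) eqSS.
apply/idP/idP.
- case/orP => [/mapP [t] | /and4P [/eqP size_s /andP [x_s sorted_s] lo_x /allP Hs]].
    rewrite IHl => /and3P [/eqP size_t sorted_t /allP Ht] [-> ->].
    rewrite size_t eqxx sorted_t andbT /=.
    by apply/and3P; split; [apply/allP => y /Ht | lia | apply/allP => y /Ht]; lia.
  rewrite size_s eqxx x_s sorted_s /=; apply/andP; split; first by lia.
  by apply/allP => y /Hs /=; lia.
- case/and4P => /eqP size_s /andP [x_s sorted_s] lo_x /allP Hs.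
  have [lo_lt_x | x_le_lo] := ltnP lo x.
    apply/orP; right; rewrite size_s eqxx x_s sorted_s /=.
    apply/andP; split; first by lia.
    by apply/allP => y ys; have := allP x_s y ys; have := Hs y ys; lia.
  have x_lo : x = lo by lia.
  apply/orP; left; apply/mapP; exists s; last by rewrite x_lo.
  by rewrite IHl size_s eqxx sorted_s; apply/allP.
Qed.

Lemma uniq_sorted_seqs l d lo : uniq (sorted_seqs l d lo).
Proof.
elim: l d lo => [|l IHl] d lo //.
elim: d lo => [|d IHd] lo //.
rewrite sorted_seqsSS cat_uniq IHd map_inj_uniq ?IHl; last by move=> ? ? [].
rewrite andbT; apply/hasPn => s; rewrite mem_sorted_seqs.
case: s => [|x s] //= /and3P [_ _ /andP [lo_lt_x _]].
by apply/mapP => -[t _ [x_lo _]]; move: lo_lt_x; rewrite x_lo ltnn.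
Qed.

Definition fitting (l l' : nat) : seq (seq nat) := sorted_seqs l l' 0.

Lemma mem_fitting s l l' : s \in fitting l l' <-> fits s l l'.
Proof.
rewrite mem_sorted_seqs /fits; split.
  by case/and3P => /eqP -> -> /allP s_le; split=> //; split=> //; apply/allP => x /s_le.
by case=> -> [-> /allP s_le]; rewrite eqxx; apply/allP => x /s_le.
Qed.

Definition entry_choices (hi lo : nat) : seq (nat * seq nat) :=
  [seq (x, s) | x <- iota lo (hi.+1 - lo), s <- fitting (hi - x) (x - lo)].

Lemma mem_entry_choices c hi lo :
  c \in entry_choices hi lo <-> lo <= c.1 <= hi /\ fits c.2 (hi - c.1) (c.1 - lo).
Proof.
split.
  case/allpairsPdep => x [s [+ /mem_fitting s_fits ->]].
  by rewrite mem_iota /=; split=> //; lia.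
case: c => x s /= [lo_x_hi /mem_fitting s_fits]; apply/allpairsPdep.
by exists x, s; rewrite mem_iota; split=> //; lia.
Qed.

Lemma uniq_entry_choices hi lo : uniq (entry_choices hi lo).
Proof.
apply: allpairs_uniq_dep => [|x _|[x s] [y t] _ _ /= [-> ->]] //.
  exact: iota_uniq.
exact: uniq_sorted_seqs.
Qed.

Definition letter_bar (l : letter) : bool := l.1.1.1.
Definition letter_i (l : letter) : nat := l.1.1.2.
Definition letter_j (l : letter) : nat := l.1.2.
Arguments letter_bar l /.
Arguments letter_i l /.
Arguments letter_j l /.

(* The entries x_i, ..., x_(i+n-1) of a row of a pattern, paired with the
   corresponding factors of X_j (of X_(bar j) if b). *)
Fixpoint layer (b : bool) (j : nat) (hi lo : nat -> nat) (i n : nat)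
  : seq (seq nat * word) :=
  if n is n'.+1 then
    [seq (c.1 :: p.1, xmon b i j c.2 ++ p.2) | c <- entry_choices (hi i) (lo i),
                                                p <- layer b j hi lo i.+1 n']
  else [:: ([::], [::])].

Lemma mem_layer b j hi lo n i p :
  p \in layer b j hi lo i n <->
  exists x s, (forall m, i <= m < i + n ->
                 lo m <= x m <= hi m /\ fits (s m) (hi m - x m) (x m - lo m)) /\
     p = (map x (iota i n), flatten [seq xmon b m j (s m) | m <- iota i n]).
Proof.
elim: n i p => [|n IHn] i p /=.
  split=> [|[x [s [_ ->]]]]; last by rewrite mem_seq1.
  rewrite mem_seq1 => /eqP ->.
  by exists (fun=> 0), (fun=> [::]); split=> // m; lia.
split.
  case/allpairsPdep => c [q [/mem_entry_choices c_ok /IHn [x [s [row_ok ->]]] ->]].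
  exists (fun m => if m == i then c.1 else x m), (fun m => if m == i then c.2 else s m).
  split=> [m m_in|].
    by case: eqP => [-> //|/eqP m_ne_i]; apply: row_ok; lia.
  rewrite /= eqxx; congr (_ :: _, _ ++ flatten _); apply/eq_in_map => m;
    by rewrite mem_iota => m_in; have -> : (m == i) = false by lia.
case=> x [s [row_ok ->]]; apply/allpairsPdep.
exists (x i, s i), (map x (iota i.+1 n), flatten [seq xmon b m j (s m) | m <- iota i.+1 n]).
split=> //; first by apply/mem_entry_choices; apply: row_ok; lia.
by apply/IHn; exists x, s; split=> // m m_in; apply: row_ok; lia.
Qed.

Lemma uniq_layer b j hi lo n i : uniq (layer b j hi lo i n).
Proof.
elim: n i => [|n IHn] i //=.
apply: allpairs_uniq => [|//|]; first exact: uniq_entry_choices.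
move=> [c p] [c' p'] /allpairsP [[c1 p1] [/mem_entry_choices [_ [size1 _]] _ [-> ->]]].
move=> /allpairsP [[c2 p2] [/mem_entry_choices [_ [size2 _]] _ [-> ->]]] /= [x12 p12].
move/eqP; rewrite eqseq_cat ?size_map ?size1 ?size2 ?x12 // => /andP [/eqP s12 /eqP w12].
have {}s12 : c1.2 = c2.2 by apply: inj_map s12 => e e' [].
clear size1 size2; move: c1 c2 p1 p2 x12 s12 p12 w12.
by move=> [? ?] [? ?] [? ?] [? ?] /= -> -> -> ->.
Qed.

Lemma count_letter_i_xmon b i j s m :
  count (fun l => letter_i l == m) (xmon b i j s) = if i == m then size s else 0.
Proof. by elim: s => [|e s IHs] /=; [|rewrite IHs]; case: (i == m). Qed.

Lemma count_letter_i_flatten b j (s : nat -> seq nat) n i m :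
  count (fun l => letter_i l == m) (flatten [seq xmon b k j (s k) | k <- iota i n])
  = if i <= m < i + n then size (s m) else 0.
Proof.
elim: n i => [|n IHn] i /=; first by case: ifP => //; lia.
rewrite count_cat count_letter_i_xmon IHn.
case: (i =P m) => [<-|ne]; first by rewrite leqnn addnS ltnS leq_addr ltnn addn0.
by rewrite add0n; congr (if _ then _ else _); lia.
Qed.

Lemma layer_word_inj b j hi lo n i : {in layer b j hi lo i n &, injective snd}.
Proof.
move=> p p' /mem_layer [x [s [row_ok ->]]] /mem_layer [x' [s' [row_ok' ->]]] /= words_eq.
congr pair => //; apply/eq_in_map => m; rewrite mem_iota => m_in.
(* The word has hi m - x m letters x_(m, j). *)
have := congr1 (count (fun l => letter_i l == m)) words_eq.
have [x_le [size_s _]] := row_ok m m_in; have [x_le' [size_s' _]] := row_ok' m m_in.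
by rewrite !count_letter_i_flatten m_in size_s size_s'; lia.
Qed.

Lemma all_layer_letters b j hi lo n i p :
  p \in layer b j hi lo i n ->
  all (fun l => (letter_bar l == b) && (letter_j l == j)) p.2.
Proof.
case/mem_layer => x [s [_ ->]]; apply/allP => l /flattenP [w /mapP [k _ ->]].
by case/mapP => e _ ->; rewrite /= !eqxx.
Qed.

Definition nth1 (xs : seq nat) (m : nat) : nat := nth 0 xs m.-1.

Lemma nth1_map_iota x k m : 1 <= m <= k -> nth1 (map x (iota 1 k)) m = x m.
Proof.
move=> m_in; rewrite /nth1 (nth_map 0) ?size_iota ?nth_iota; try lia.
by congr x; lia.
Qed.

Lemma layer_bounds b j hi lo k p :
  p \in layer b j hi lo 1 k -> forall m, 1 <= m <= k -> lo m <= nth1 p.1 m <= hi m.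
Proof.
case/mem_layer => x [s [row_ok ->]] m m_in.
have /row_ok [] : 1 <= m < 1 + k by lia.
by rewrite nth1_map_iota.
Qed.

Section LayerSums.

Variable R : comPzSemiRingType.
Local Open Scope ring_scope.

Lemma sum_entry_choices hi lo (f : nat -> R) :
  \sum_(c <- entry_choices hi lo) f c.1 =
  \sum_(x <- iota lo (hi.+1 - lo)) f x *+ 'C(hi - lo, hi - x).
Proof.
rewrite big_allpairs_dep /=; apply: eq_big_seq => x /[!mem_iota] x_in.
rewrite big_const_seq count_predT iter_addr_0 size_sorted_seqs.
by congr (_ *+ 'C(_, _)); lia.
Qed.

Lemma binomial_iota (p q : R) lo hi : (lo <= hi)%N ->
  \sum_(x <- iota lo (hi.+1 - lo)) (p ^+ (x - lo) * q ^+ (hi - x)) *+ 'C(hi - lo, hi - x)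
  = (p + q) ^+ (hi - lo).
Proof.
move=> lo_hi; have -> : (hi.+1 - lo = (hi - lo).+1)%N by lia.
have -> : hi = (lo + (hi - lo))%N by lia.
move: (hi - lo)%N => d; rewrite addKn -[lo]addn0 iotaDl big_map addn0.
rewrite addrC exprDn; change (iota 0 d.+1) with (index_iota 0 d.+1).
rewrite big_mkord; apply: eq_bigr => k _.
have := ltn_ord k; rewrite ltnS => k_le.
by rewrite addKn subnDl bin_sub // mulrC.
Qed.

Lemma sum_layer_prod b j hi lo (phi : nat -> nat -> R) n i :
  \sum_(p <- layer b j hi lo i n) \prod_(m < n) phi (i + m)%N (nth 0%N p.1 m)
  = \prod_(m < n) \sum_(c <- entry_choices (hi (i + m)%N) (lo (i + m)%N)) phi (i + m)%N c.1.
Proof.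
elim: n i => [|n IHn] i /=; first by rewrite big_seq1 !big_ord0.
rewrite big_allpairs_dep big_ord_recl addn0.
under [X in _ = _ * X]eq_bigr => m _ do rewrite /bump /= addnS -addSn.
rewrite -IHn big_distrl; apply: eq_bigr => c _; rewrite big_distrr.
apply: eq_bigr => p _; rewrite big_ord_recl /= addn0; congr (_ * _).
by apply: eq_bigr => m _; rewrite /bump /= addnS -addSn.
Qed.

Definition prod_gaps (a : nat -> R) (k : nat) (x : nat -> nat) : R :=
  \prod_(m < k) a m.+1 ^+ (x m.+1 - (if m.+1 == k then 0 else x m.+2)).

Lemma prod_gaps_split (a : nat -> R) k (x hi lo : nat -> nat) :
  a 0%N = 1 ->
  (forall m, (1 <= m < k)%N -> lo m = hi m.+1) ->
  (forall m, (1 <= m <= k)%N -> lo m <= x m <= hi m)%N ->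
  prod_gaps a k x =
  a k ^+ lo k * \prod_(m < k) (a m.+1 ^+ (x m.+1 - lo m.+1) * a m ^+ (hi m.+1 - x m.+1)).
Proof.
move=> a0 lo_hi x_in; case: k lo_hi x_in => [|k] lo_hi x_in.
  by rewrite /prod_gaps !big_ord0 a0 expr1n mulr1.
have gapE (m : 'I_k.+1) :
    a m.+1 ^+ (x m.+1 - (if m.+1 == k.+1 then 0 else x m.+2)) =
    a m.+1 ^+ (x m.+1 - lo m.+1) * a m.+1 ^+ (lo m.+1 - (if m.+1 == k.+1 then 0 else x m.+2)).
  rewrite -exprD; congr (_ ^+ _); have := ltn_ord m; have := x_in m.+1.
  case: eqP => [_|ne] x_m m_lt; first by lia.
  by have := x_in m.+2; have := lo_hi m.+1; lia.
rewrite /prod_gaps (eq_bigr _ (fun m _ => gapE m)) !big_split /= mulrCA; congr (_ * _).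
rewrite big_ord_recr /= eqxx subn0 [in RHS]big_ord_recl /= a0 expr1n mul1r mulrC.
congr (_ * _); apply: eq_bigr => m _; have m_lt := ltn_ord m.
by rewrite /bump /= ifN_eq ?lo_hi //; lia.
Qed.

Lemma sum_layer_prod_gaps b j hi lo k (a : nat -> R) :
  a 0%N = 1 ->
  (forall m, (1 <= m < k)%N -> lo m = hi m.+1) ->
  (forall m, (1 <= m <= k)%N -> lo m <= hi m)%N ->
  \sum_(p <- layer b j hi lo 1 k) prod_gaps a k (nth1 p.1) =
  a k ^+ lo k * \prod_(m < k) (a m.+1 + a m) ^+ (hi m.+1 - lo m.+1).
Proof.
move=> a0 lo_hi lo_le_hi.
pose phi i v := a i ^+ (v - lo i) * a i.-1 ^+ (hi i - v).
transitivity (\sum_(p <- layer b j hi lo 1 k)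
                a k ^+ lo k * \prod_(m < k) phi (1 + m)%N (nth 0%N p.1 m)).
  rewrite !big_seq; apply: eq_bigr => p p_in.
  by rewrite (prod_gaps_split a0 lo_hi) //; exact: layer_bounds p_in.
rewrite -mulr_sumr sum_layer_prod; congr (_ * _); apply: eq_bigr => m _.
have m_lt := ltn_ord m.
by rewrite sum_entry_choices -binomial_iota ?lo_le_hi //; lia.
Qed.

End LayerSums.

Lemma has_card_ext (P Q : word -> Prop) c :
  (forall w, P w <-> Q w) -> has_card P c -> has_card Q c.
Proof. by move=> PQ [s [uniq_s [Ps size_s]]]; exists s; split=> //; split=> // w; rewrite -PQ. Qed.

Lemma has_card_image (Q : word -> Prop) c (f : word -> word) :
  injective f -> has_card Q c -> has_card (fun w => exists2 u, Q u & w = f u) c.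
Proof.
move=> inj_f [s [uniq_s [Qs size_s]]]; exists (map f s); rewrite map_inj_uniq // size_map.
split=> //; split=> // w; split=> [[u /Qs u_s ->]|/mapP [u /Qs Qu ->]]; last by exists u.
exact: map_f.
Qed.

Lemma has_card_union (I : eqType) (L : seq I) (P : I -> word -> Prop) (c : I -> int) :
  uniq L ->
  (forall p q w, p \in L -> q \in L -> P p w -> P q w -> p = q) ->
  (forall p, p \in L -> has_card (P p) (c p)) ->
  has_card (fun w => exists2 p, p \in L & P p w) (\sum_(p <- L) c p)%R.
Proof.
elim: L => [|p L IHL] /=.
  by exists [::]; rewrite big_nil; split=> //; split=> // w; split=> // -[].
case/andP => p_notin_L uniq_L disj card_P.
have [||s [uniq_s [Ls size_s]]] := IHL uniq_L.
- by move=> q q' w qL q'L; apply: disj; rewrite inE ?qL ?q'L orbT.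
- by move=> q qL; apply: card_P; rewrite inE qL orbT.
have [sp [uniq_sp [Psp size_sp]]] := card_P p (mem_head p L).
exists (sp ++ s); rewrite cat_uniq uniq_sp uniq_s size_cat PoszD size_sp size_s big_cons.
split; last split=> // w.
  rewrite andbT; apply/hasPn => w /Ls [q qL Pqw]; apply/negP => /Psp Ppw.
  by move: p_notin_L; rewrite (disj p q w) ?inE ?eqxx ?qL ?orbT.
rewrite mem_cat; split=> [[q] /[!inE] /orP [/eqP -> /Psp -> // | qL Pqw] | ].
  by apply/orP; right; apply/Ls; exists q.
case/orP => [/Psp Ppw | /Ls [q qL Pqw]]; first by exists p; rewrite ?mem_head.
by exists q; rewrite // inE qL orbT.
Qed.

Lemma catIs (T : Type) : left_injective (@cat T).
Proof.
move=> t u v uv_eq; have size_uv : size u = size v.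
  by move/(congr1 size): uv_eq; rewrite !size_cat => /addIn.
by rewrite -(take_size_cat t size_uv) uv_eq take_size_cat.
Qed.

Lemma filter_cat_tail (T : eqType) (a : pred T) u t :
  all (predC a) u -> all a t -> filter a (u ++ t) = t.
Proof.
by rewrite all_predC has_filter negbK filter_cat => /eqP -> /all_filterP ->.
Qed.

Definition layered (Q : (nat -> nat) -> word -> Prop) (L : seq (seq nat * word))
  (w : word) : Prop :=
  exists2 p, p \in L & exists2 u, Q (nth1 p.1) u & w = u ++ p.2.

Lemma has_card_layered (Q : (nat -> nat) -> word -> Prop) (L : seq (seq nat * word))
    (c : seq nat -> int) (last_letter : pred letter) :
  uniq L -> {in L &, injective snd} ->
  (forall p, p \in L -> all last_letter p.2) ->
  (forall f u, Q f u -> all (predC last_letter) u) ->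
  (forall p, p \in L -> has_card (Q (nth1 p.1)) (c p.1)) ->
  has_card (layered Q L) (\sum_(p <- L) c p.1)%R.
Proof.
move=> uniq_L inj_L last_L inner_Q card_Q.
apply: has_card_union => // [p q w pL qL [u Qu ->] [v Qv]|p pL].
  have tail_p := filter_cat_tail (inner_Q _ _ Qu) (last_L p pL).
  have tail_q := filter_cat_tail (inner_Q _ _ Qv) (last_L q qL).
  by move/(congr1 (filter last_letter)); rewrite tail_p tail_q; apply: inj_L.
exact/has_card_image/card_Q/pL/catIs.
Qed.

Lemma Bhalf_bound_eq r f g w :
  (forall i, 1 <= i <= r -> f i = g i) -> Bhalf r f w -> Bhalf r g w.
Proof.
move=> fg [lam [eta [sb [sn [[top rows] rest]]]]].
by exists lam, eta, sb, sn; split=> //; split=> // i i_in; rewrite -fg ?top.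
Qed.

Lemma Bfull_bound_eq r f g w :
  (forall i, 1 <= i <= r -> f i = g i) -> Bfull r f w -> Bfull r g w.
Proof.
move=> fg [lam [eta [sb [sn [[top rows] rest]]]]].
by exists lam, eta, sb, sn; split=> //; split=> // i i_in; rewrite -fg ?top.
Qed.

Lemma eq_Xhalf r sb sb' sn sn' :
  (forall i j, j < r -> sb' i j = sb i j) -> (forall i j, j < r -> sn' i j = sn i j) ->
  Xhalf r sb' sn' = Xhalf r sb sn.
Proof.
move=> sbE snE; congr flatten; apply/eq_in_map => j /[!mem_iota] j_in.
by congr (flatten _ ++ flatten _); apply: eq_map => i; rewrite (sbE, snE) //; lia.
Qed.

Lemma XhalfS k sb sn : 1 <= k -> Xhalf k.+1 sb sn = Xhalf k sb sn ++ (Xbar sb k ++ Xpl sn k).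
Proof.
case: k => // k _; rewrite /Xhalf !succnK -(addn1 k) iotaD map_cat flatten_cat /=.
by rewrite cats0 add1n addn1.
Qed.

Lemma Xhalf_letters r sb sn l : l \in Xhalf r sb sn -> letter_j l < r.
Proof.
case/flattenP => _ /mapP [j /[!mem_iota] j_in ->] /[!mem_cat].
by case/orP => /flattenP [_ /mapP [i _ ->] /mapP [e _ ->]] /=; lia.
Qed.

Lemma Xbar_letters sb j l : l \in Xbar sb j -> letter_bar l /\ letter_j l = j.
Proof. by case/flattenP => _ /mapP [i _ ->] /mapP [e _ ->]. Qed.

Lemma Bhalf_letters r eta u : Bhalf r eta u -> all (fun l => letter_j l < r) u.
Proof. by case=> la [et [sb [sn [_ [_ [_ ->]]]]]]; apply/allP => l /Xhalf_letters. Qed.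

Lemma Bfull_letters r lam u :
  Bfull r lam u -> all (fun l => (letter_j l < r) || (letter_j l == r) && letter_bar l) u.
Proof.
case=> la [et [sb [sn [_ [_ [_ ->]]]]]]; apply/allP => l /[!mem_cat].
by case/orP => [/Xhalf_letters -> // | /Xbar_letters [-> ->]]; rewrite eqxx orbT.
Qed.

Definition bound_below (r : nat) (lam : nat -> nat) (i : nat) : nat :=
  if i == r then 0 else lam i.+1.

Lemma Bfull_layered r lam w :
  Bfull r lam w -> layered (Bhalf r) (layer true r lam (bound_below r lam) 1 r) w.
Proof.
case=> la [et [sb [sn [[top [row_b row_n]] [fit_b [fit_n ->]]]]]].
have belowE m : 1 <= m <= r -> lamx la r m.+1 = bound_below r lam m.
  by move=> m_in; rewrite /lamx /bound_below eqSS; case: eqP => // /eqP m_ne_r; rewrite top //; lia.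
exists (map (et r) (iota 1 r), Xbar sb r).
  apply/mem_layer; exists (et r), (fun i => sb i r); split=> // m m_in.
  have m_r : 1 <= m <= r by lia.
  have := row_b m r; have := fit_b m r; rewrite /lb /lb' belowE // top //.
  by move=> fit row; split; [apply: row | apply: fit]; lia.
exists (Xhalf r sb sn) => //.
apply: (@Bhalf_bound_eq _ (et r)) => [i i_in|]; first by rewrite nth1_map_iota.
exists la, et, sb, sn; split; first by split=> //; split=> // i j *; apply: row_b; lia.
by split=> // i j *; apply: fit_b; lia.
Qed.

Lemma layered_Bfull r lam w :
  layered (Bhalf r) (layer true r lam (bound_below r lam) 1 r) w -> Bfull r lam w.
Proof.
case=> _ /mem_layer [x [s [row_ok ->]]] [u /= Bu ->].
have {Bu} : Bhalf r x u by apply: Bhalf_bound_eq Bu => i i_in; rewrite nth1_map_iota.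
case=> la [et [sb [sn [[top [row_b row_n]] [fit_b [fit_n ->]]]]]].
exists (fun j i => if j == r then lam i else la j i), et,
       (fun i j => if j == r then s i else sb i j), sn.
split; [split; [|split] | split; [|split]].
- by move=> i _; rewrite eqxx.
- move=> i j ? ? ? /=; case: (j =P r) => [-> | /eqP j_ne_r].
    by have [+ _] := row_ok i ltac:(lia); rewrite /lamx /= !eqxx top //; lia.
  by rewrite /lamx /= (negbTE j_ne_r); apply: row_b => //; lia.
- by move=> i j ? ? ? /=; rewrite ifN_eq; [apply: row_n | lia].
- move=> i j ? ? ? /=; case: (j =P r) => [-> | /eqP j_ne_r].
    by have [_ +] := row_ok i ltac:(lia); rewrite /lb /lb' /lamx /= !eqxx top //; lia.
  by rewrite /lb /lb' /lamx /= (negbTE j_ne_r); apply: fit_b => //; lia.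
- by move=> i j ? ? ? /=; rewrite /ln /ln' ifN_eq; [apply: fit_n | lia].
- congr (_ ++ _); first by apply: eq_Xhalf => [i j j_lt /=|//]; rewrite ifN_eq //; lia.
  by rewrite /Xbar; congr flatten; apply: eq_map => i; rewrite eqxx.
Qed.

Lemma Bhalf_layered k eta w : 1 <= k ->
  Bhalf k.+1 eta w -> layered (Bfull k) (layer false k eta (fun i => eta i.+1) 1 k) w.
Proof.
move=> k_pos [la [et [sb [sn [[top [row_b row_n]] [fit_b [fit_n ->]]]]]]].
exists (map (la k) (iota 1 k), Xpl sn k).
  apply/mem_layer; exists (la k), (fun i => sn i k); split=> // m m_in.
  have := row_n m k; have := fit_n m k; rewrite /ln /ln' !top; try lia.
  by move=> fit row; split; [apply: row | apply: fit]; lia.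
exists (Xhalf k sb sn ++ Xbar sb k); last by rewrite XhalfS // catA.
apply: (@Bfull_bound_eq _ (la k)) => [i i_in|]; first by rewrite nth1_map_iota.
exists la, et, sb, sn; split.
  by split=> //; split=> i j *; [apply: row_b | apply: row_n]; lia.
by split=> [i j *|]; [apply: fit_b; lia | split=> // i j *; apply: fit_n; lia].
Qed.

Lemma layered_Bhalf k eta w : 1 <= k ->
  layered (Bfull k) (layer false k eta (fun i => eta i.+1) 1 k) w -> Bhalf k.+1 eta w.
Proof.
move=> k_pos [_ /mem_layer [x [s [row_ok ->]]] [u /= Bu ->]].
have {Bu} : Bfull k x u by apply: Bfull_bound_eq Bu => i i_in; rewrite nth1_map_iota.
case=> la [et [sb [sn [[top [row_b row_n]] [fit_b [fit_n ->]]]]]].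
exists la, (fun j i => if j == k.+1 then eta i else et j i), sb,
       (fun i j => if j == k then s i else sn i j).
split; [split; [|split] | split; [|split]].
- by move=> i _ /=; rewrite eqxx.
- by move=> i j ? ? ? /=; rewrite ifN_eq; [apply: row_b | ]; lia.
- move=> i j ? ? ? /=; case: (j =P k) => [-> | /eqP j_ne_k].
    by have [+ _] := row_ok i ltac:(lia); rewrite eqxx top //; lia.
  by rewrite !ifN_eq ?eqSS //; apply: row_n; lia.
- by move=> i j ? ? ? /=; rewrite /lb /lb' ifN_eq; [apply: fit_b | ]; lia.
- move=> i j ? ? ? /=; case: (j =P k) => [-> | /eqP j_ne_k].
    by have [_ +] := row_ok i ltac:(lia); rewrite /ln /ln' /= !eqxx top //; lia.
  by rewrite /ln /ln' /= !ifN_eq; [apply: fit_n | ..]; lia.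
- rewrite XhalfS // catA; congr ((_ ++ _) ++ _).
    by apply: eq_Xhalf => [//|i j j_lt /=]; rewrite ifN_eq //; lia.
  by rewrite /Xpl; congr flatten; apply: eq_map => i /=; rewrite eqxx.
Qed.

Definition nonincr (r : nat) (f : nat -> nat) : Prop :=
  forall i, 1 <= i < r -> f i.+1 <= f i.

Lemma has_card_layer_prod_gaps (B : word -> Prop) (Q : (nat -> nat) -> word -> Prop)
    (a : nat -> int) b j k (hi lo : nat -> nat) :
  a 0 = 1%R ->
  (forall m, 1 <= m < k -> lo m = hi m.+1) ->
  (forall m, 1 <= m <= k -> lo m <= hi m) ->
  (forall w, layered Q (layer b j hi lo 1 k) w <-> B w) ->
  (forall f u, Q f u -> all (predC (fun l => (letter_bar l == b) && (letter_j l == j))) u) ->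
  (forall f, nonincr k f -> has_card (Q f) (prod_gaps a k f)) ->
  has_card B (a k ^+ lo k * \prod_(m < k) (a m.+1 + a m) ^+ (hi m.+1 - lo m.+1))%R.
Proof.
move=> a0 lo_hi lo_le_hi BE Q_letters card_Q.
apply: has_card_ext BE _; rewrite -(sum_layer_prod_gaps b j a0 lo_hi lo_le_hi).
apply: (@has_card_layered _ _ (fun xs => prod_gaps a k (nth1 xs)) _ _ _ _ Q_letters)
  => [||p /all_layer_letters //|p p_in].
- exact: uniq_layer.
- exact: layer_word_inj.
apply: card_Q => i i_in.
have bnd := layer_bounds p_in.
by have := bnd i.+1; have := bnd i; have := lo_hi i; lia.
Qed.

Local Open Scope ring_scope.

Definition dbin (n i : nat) : int := binZ n i%:Z - binZ n (i%:Z - 2).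

Lemma dbin0 n : dbin n 0 = 1.
Proof. by rewrite /dbin /= bin0. Qed.

Lemma dbin1 n : dbin n 1 = 'C(n, 1)%:Z.
Proof. by rewrite /dbin /= subr0. Qed.

Lemma dbinSS n m : dbin n m.+2 = 'C(n, m.+2)%:Z - 'C(n, m)%:Z.
Proof. by rewrite /dbin -[m.+2]addn2 PoszD addrK. Qed.

Lemma dbinS n i : dbin n.+1 i.+1 = dbin n i.+1 + dbin n i.
Proof.
case: i => [|[|i]]; first by rewrite dbin0 !dbin1 binS bin0 PoszD.
  by rewrite dbin1 !dbinSS !binS !bin0 PoszD; lia.
by rewrite !dbinSS !binS !PoszD; lia.
Qed.

Lemma dbin_half k : (0 < k)%N -> dbin (2 * k) k.+1 = 0.
Proof.
case: k => // k _; rewrite dbinSS (_ : 'C(2 * k.+1, k.+2) = 'C(2 * k.+1, k)) ?subrr //.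
by rewrite -bin_sub; [congr binomial | ]; lia.
Qed.

Definition Bhalf_card (r : nat) : Prop :=
  forall eta, nonincr r eta -> has_card (Bhalf r eta) (prod_gaps (dbin (2 * r).-1) r eta).

Definition Bfull_card (r : nat) : Prop :=
  forall lam, nonincr r lam -> has_card (Bfull r lam) (prod_gaps (dbin (2 * r)) r lam).

Lemma Bhalf_card1 : Bhalf_card 1.
Proof.
move=> eta _; exists [:: [::]]; split=> //; split; last by rewrite /prod_gaps big_ord1 /= expr1n.
move=> w; rewrite mem_seq1; split=> [[la [et [sb [sn [_ [_ [_ ->]]]]]]] //|/eqP ->].
exists (fun _ _ => 0%N), (fun _ i => eta i), (fun _ _ => [::]), (fun _ _ => [::]).
by split; [split; [|split] | split; [|split]] => // *; lia.
Qed.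

Lemma Bfull_card_from_Bhalf r : (0 < r)%N -> Bhalf_card r -> Bfull_card r.
Proof.
move=> r_pos card_half lam lam_decr.
have -> : prod_gaps (dbin (2 * r)) r lam =
  dbin (2 * r).-1 r ^+ bound_below r lam r *
  \prod_(m < r) (dbin (2 * r).-1 m.+1 + dbin (2 * r).-1 m) ^+ (lam m.+1 - bound_below r lam m.+1).
  rewrite /bound_below eqxx expr0 mul1r; apply: eq_bigr => m _.
  by rewrite -dbinS prednK // muln_gt0.
apply: (has_card_layer_prod_gaps (Q := Bhalf r)) => //.
- exact: dbin0.
- by move=> m m_in; rewrite /bound_below ifN_eq //; lia.
- move=> m m_in; rewrite /bound_below; case: eqP => // /eqP m_ne_r; apply: lam_decr; lia.
- by move=> w; split; [apply: layered_Bfull | apply: Bfull_layered].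
- by move=> f u /Bhalf_letters; apply: sub_all => l /= /ltn_eqF ->; rewrite andbF.
Qed.

Lemma Bhalf_card_from_Bfull k : (0 < k)%N -> Bfull_card k -> Bhalf_card k.+1.
Proof.
move=> k_pos card_full eta eta_decr.
have -> : prod_gaps (dbin (2 * k.+1).-1) k.+1 eta =
  dbin (2 * k) k ^+ eta k.+1 *
  \prod_(m < k) (dbin (2 * k) m.+1 + dbin (2 * k) m) ^+ (eta m.+1 - eta m.+2).
  rewrite /prod_gaps (_ : (2 * k.+1).-1 = (2 * k).+1)%N; last by lia.
  rewrite big_ord_recr /= eqxx subn0 mulrC dbinS dbin_half // add0r; congr (_ * _).
  apply: eq_bigr => m _; have m_lt := ltn_ord m.
  by rewrite dbinS ifN_eq //; lia.
apply: (has_card_layer_prod_gaps (Q := Bfull k) (b := false) (j := k) (hi := eta) (lo := fun i => eta i.+1)) => //.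
- exact: dbin0.
- by move=> w; split; [apply: layered_Bhalf | apply: Bhalf_layered].
- move=> f u /Bfull_letters; apply: sub_all => l /=.
  by case/orP => [/ltn_eqF -> | /andP [_ ->]]; rewrite ?andbF.
Qed.

Lemma card_Bhalf_Bfull r : (0 < r)%N -> Bhalf_card r /\ Bfull_card r.
Proof.
elim: r => // r IHr _.
have card_half : Bhalf_card r.+1.
  by case: r IHr => [_ | r IHr]; [exact: Bhalf_card1 | exact: Bhalf_card_from_Bfull (IHr isT).2].
by split; last exact: Bfull_card_from_Bhalf.
Qed.

Lemma prod_gaps_wsum (a : nat -> int) r n :
  prod_gaps a r (wsum r n) = \prod_(1 <= i < r.+1) a i ^+ n i.
Proof.
rewrite big_add1 /= big_mkord; apply: eq_bigr => m _; congr (_ ^+ _).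
have m_lt := ltn_ord m; rewrite /wsum big_ltn //.
case: eqP => [-> | _]; first by rewrite big_geq ?addn0 ?subn0.
by rewrite addnK.
Qed.

Lemma nonincr_wsum r n : nonincr r (wsum r n).
Proof. by move=> i i_in; rewrite [leqRHS]/wsum big_ltn ?leq_addl //; lia. Qed.

Unset Implicit Arguments.

Theorem proposition3p2 (r : nat) (hr : (1 <= r)%N) :
  (forall n : nat -> nat,
     has_card (Bhalf r (wsum r n))
       (\prod_(1 <= i < r.+1)
          (binZ (2 * r).-1 i%:Z - binZ (2 * r).-1 (i%:Z - 2)) ^+ n i)) /\
  (forall m : nat -> nat,
     has_card (Bfull r (wsum r m))
       (\prod_(1 <= i < r.+1)
          (binZ (2 * r) i%:Z - binZ (2 * r) (i%:Z - 2)) ^+ m i)).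
Proof.
have [card_half card_full] := card_Bhalf_Bfull hr.
by split=> n; rewrite -prod_gaps_wsum; [apply: card_half | apply: card_full];
  exact: nonincr_wsum.
Qed.
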